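(* $G(x)=\{u\in L : (u,u)=2\}$.
   Context: $\mathbb F$ is a field of characteristic zero and $\mathfrak{sl}_2$ is the Lie algebra of $2\times2$ trace-zero matrices over $\mathbb F$, with trace form $(u,v)=\mathrm{tr}(uv)$. The equitable basis is $x=\begin{pmatrix}1&0\\0&-1\end{pmatrix}$, $y=\begin{pmatrix}-1&2\\0&1\end{pmatrix}$, $z=\begin{pmatrix}-1&0\\-2&1\end{pmatrix}$. Let $x^*=\begin{pmatrix}1&-1\\1&-1\end{pmatrix}$, $y^*=\begin{pmatrix}0&0\\1&0\end{pmatrix}$, $z^*=\begin{pmatrix}0&-1\\0&0\end{pmatrix}$ (these are nilpotent). $G$ is the subgroup of $\mathrm{Aut}_{\mathbb F}(\mathfrak{sl}_2)$ generated by $\exp(\mathrm{ad}\,x^* )$, $\exp(\mathrm{ad}\,y^* )$ and $\exp(\mathrm{ad}\,z^* )$. $G(x)$ is the $G$-orbit of $x$. $L=\mathbb Zx\oplus\mathbb Zy\oplus\mathbb Zz$. *)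

From HB Require Import structures.
From mathcomp Require Import all_boot all_order all_algebra.
Set Implicit Arguments. Unset Strict Implicit. Unset Printing Implicit Defensive.
Import Order.TTheory GRing.Theory Num.Theory.
Local Open Scope ring_scope.

Section SL2.
Variable F : fieldType.

Definition mx2 (a b c d : F) : 'M[F]_2 :=
  \matrix_(i < 2, j < 2)
    if (i : nat) == 0%N then (if (j : nat) == 0%N then a else b)
    else (if (j : nat) == 0%N then c else d).

Definition eqx : 'M[F]_2 := mx2 1 0 0 (-1).
Definition eqy : 'M[F]_2 := mx2 (-1) 2 0 1.
Definition eqz : 'M[F]_2 := mx2 (-1) 0 (-2) 1.

Definition xs : 'M[F]_2 := mx2 1 (-1) 1 (-1).
Definition ys : 'M[F]_2 := mx2 0 0 1 0.
Definition zs : 'M[F]_2 := mx2 0 (-1) 0 0.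

Definition trform (u v : 'M[F]_2) : F := \tr (u *m v).

Definition ad (n : 'M[F]_2) (u : 'M[F]_2) : 'M[F]_2 := n *m u - u *m n.

(* exp(ad n) for nilpotent n: ad n is nilpotent on the 3-dimensional sl2,
   so (ad n)^3 = 0 and the exponential series is the finite sum below. *)
Definition expad (n : 'M[F]_2) (u : 'M[F]_2) : 'M[F]_2 :=
  \sum_(k < 3) ((factorial k)%:R)^-1 *: iter k (ad n) u.

Definition generator (n : 'M[F]_2) : Prop := n = xs \/ n = ys \/ n = zs.

(* G(x): the orbit of x under the group G generated by the three
   automorphisms exp(ad xs), exp(ad ys), exp(ad zs); i.e. the smallest set
   containing x and closed under each generator and its inverse. *)
Inductive Gorbit : 'M[F]_2 -> Prop :=
| Gorbit_base : Gorbit eqx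
| Gorbit_fwd n u : generator n -> Gorbit u -> Gorbit (expad n u)
| Gorbit_inv n u : generator n -> Gorbit (expad n u) -> Gorbit u.

Definition inL (u : 'M[F]_2) : Prop :=
  exists a b c : int, u = a%:~R *: eqx + b%:~R *: eqy + c%:~R *: eqz.

End SL2.

(* Write [lat a b c] for a x + b y + c z with a, b, c integers.  As matrices
   lat a b c = [[a-b-c, 2b], [-2c, -a+b+c]], so its trace-form square is
   2 Q(a,b,c) with Q = a^2+b^2+c^2-2(ab+bc+ca); membership in L together
   with (u,u) = 2 therefore means u = lat a b c with Q(a,b,c) = 1 (here
   characteristic 0 is used, to cancel the integer cast).

   Each generator n of G squares to zero, so exp(ad n) is conjugation by
   1 + n; computing it on lat a b c shows that the three generators act on
   coordinates by integral maps preserving Q, e.g.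
   exp(ad x^* )(lat a b c) = lat a (2a+2b-c) b.  Hence the set of solutions
   of Q = 1 is G-stable, which gives G(x) ⊆ {u in L | (u,u) = 2}.

   Conversely, a Vieta-jumping descent: if Q(a,b,c) = 1 and |c| is the
   largest coordinate, replacing c by the other root 2a+2b-c of Q(a,b,.)=1
   strictly decreases |a|+|b|+|c| unless the triple is a unit vector ±e_i,
   and each ±e_i is reached from x = lat 1 0 0 by explicit moves. *)

From HB Require Import structures.
From mathcomp Require Import all_boot all_order all_algebra.
From mathcomp Require Import zify ring.
Set Implicit Arguments.
Unset Strict Implicit.
Unset Printing Implicit Defensive.
Import Order.TTheory GRing.Theory Num.Theory.
Local Open Scope ring_scope.

Definition quad (a b c : int) : int :=
  a ^+ 2 + b ^+ 2 + c ^+ 2 - 2 * (a * b + b * c + c * a).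

Definition weight (a b c : int) : nat := (`|a| + `|b| + `|c|)%N.

(* On Q = 1 all coordinates have the same sign: (a+b-c)^2 = 1 + 4ab. *)
Lemma quad1_mul_ge0 a b c : quad a b c = 1 -> 0 <= a * b.
Proof.
move=> hQ.
have e : (a + b - c) ^+ 2 = quad a b c + 4 * (a * b) by rewrite /quad; ring.
by have := sqr_ge0 (a + b - c); rewrite e hQ; lia.
Qed.

(* Vieta jumping for a positive largest coordinate: the other root
   c' = 2a+2b-c of Q(a,b,.) = 1 satisfies c c' = (a-b)^2 - 1, so |c'| < c. *)
Lemma quad1_descent_pos a b c : quad a b c = 1 -> 0 < c ->
  `|a| <= c -> `|b| <= c -> 1 < a + b + c -> `|2 * a + 2 * b - c| < c.
Proof.
move=> hQ c_gt0 ac bc abc_gt1.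
have ca_ge0 : 0 <= c * a by apply: (@quad1_mul_ge0 c a b); rewrite -[RHS]hQ /quad; ring.
have cb_ge0 : 0 <= c * b by apply: (@quad1_mul_ge0 c b a); rewrite -[RHS]hQ /quad; ring.
have vieta : c * (2 * a + 2 * b - c) = (a - b) ^+ 2 - quad a b c.
  by rewrite /quad; ring.
rewrite hQ in vieta.
have [a_ge0 b_ge0] : 0 <= a /\ 0 <= b by nia.
have c_neq1 : c != 1 by apply/negP => /eqP c1; move: vieta; rewrite c1; nia.
nia.
Qed.

(* Vieta jumping in general, by the symmetry Q(-a,-b,-c) = Q(a,b,c). *)
Lemma quad1_descent a b c : quad a b c = 1 -> `|a| <= `|c| -> `|b| <= `|c| ->
  (1 < weight a b c)%N -> `|2 * a + 2 * b - c| < `|c|.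
Proof.
rewrite /weight => hQ ac bc w_gt1.
have ca_ge0 : 0 <= c * a by apply: (@quad1_mul_ge0 c a b); rewrite -[RHS]hQ /quad; ring.
have cb_ge0 : 0 <= c * b by apply: (@quad1_mul_ge0 c b a); rewrite -[RHS]hQ /quad; ring.
have [c_gt0|c_lt0|c0] := ltgtP 0 c.
- rewrite (gtr0_norm c_gt0) in ac bc *; apply: quad1_descent_pos => //; nia.
- have hQN : quad (- a) (- b) (- c) = 1 by rewrite -[RHS]hQ /quad; ring.
  have := quad1_descent_pos hQN; rewrite !normrN (ltr0_norm c_lt0) in ac bc *.
  nia.
- by move: w_gt1 ac bc; rewrite -c0; lia.
Qed.

Lemma pchar0_intr_inj (F : fieldType) : [pchar F] =i pred0 ->
  injective (fun k : int => k%:~R : F).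
Proof.
move=> charF0; suff cast_eq0 k : (k%:~R : F) = 0 -> k = 0.
  by move=> m n e; apply/eqP; rewrite -subr_eq0; apply/eqP/cast_eq0; rewrite intrB e subrr.
case: k => p; rewrite ?NegzE ?intrN => /eqP; rewrite ?oppr_eq0 ?pmulrn.
  by rewrite ((pcharf0P F).1 charF0) => /eqP ->.
by rewrite ((pcharf0P F).1 charF0).
Qed.

Section Mx2Calculus.
Variable F : fieldType.
Implicit Types a b c d p q r s k : F.

Lemma mx2_add a b c d p q r s :
  mx2 a b c d + mx2 p q r s = mx2 (a + p) (b + q) (c + r) (d + s).
Proof. by apply/matrixP => -[[|[|i]] ?] [[|[|j]] ?]; rewrite !mxE. Qed.

Lemma mx2_opp a b c d : - mx2 a b c d = mx2 (- a) (- b) (- c) (- d).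
Proof. by apply/matrixP => -[[|[|i]] ?] [[|[|j]] ?]; rewrite !mxE. Qed.

Lemma mx2_scale k a b c d : k *: mx2 a b c d = mx2 (k * a) (k * b) (k * c) (k * d).
Proof. by apply/matrixP => -[[|[|i]] ?] [[|[|j]] ?]; rewrite !mxE. Qed.

Lemma mx2_mul a b c d p q r s :
  mx2 a b c d *m mx2 p q r s =
  mx2 (a * p + b * r) (a * q + b * s) (c * p + d * r) (c * q + d * s).
Proof.
apply/matrixP => -[[|[|i]] ?] [[|[|j]] ?];
  by rewrite !mxE !big_ord_recl big_ord0 addr0 !mxE.
Qed.

Lemma mx2_one : (1 : 'M[F]_2) = mx2 1 0 0 1.
Proof. by apply/matrixP => -[[|[|i]] ?] [[|[|j]] ?]; rewrite !mxE. Qed.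

Lemma mx2_trace a b c d : \tr (mx2 a b c d) = a + d.
Proof. by rewrite /mxtrace !big_ord_recl big_ord0 addr0 !mxE. Qed.

Lemma mx2_zero : (0 : 'M[F]_2) = mx2 0 0 0 0.
Proof. by apply/matrixP => -[[|[|i]] ?] [[|[|j]] ?]; rewrite !mxE. Qed.

End Mx2Calculus.

Section Sl2.
Variable F : fieldType.
Implicit Types (a b c : int) (n u v : 'M[F]_2).

Definition lat (a b c : int) : 'M[F]_2 :=
  a%:~R *: eqx F + b%:~R *: eqy F + c%:~R *: eqz F.

Lemma latE a b c :
  lat a b c = mx2 (a - b - c)%:~R (2 * b)%:~R (- 2 * c)%:~R (- a + b + c)%:~R.
Proof. by rewrite /lat /eqx /eqy /eqz !mx2_scale !mx2_add; congr mx2; ring. Qed.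

Lemma trform_lat a b c :
  trform (lat a b c) (lat a b c) = (2 * quad a b c)%:~R.
Proof. by rewrite /trform latE mx2_mul mx2_trace /quad; ring. Qed.

Lemma xs_sq0 : xs F *m xs F = 0.
Proof. by rewrite /xs mx2_mul mx2_zero; congr mx2; ring. Qed.

Lemma ys_sq0 : ys F *m ys F = 0.
Proof. by rewrite /ys mx2_mul mx2_zero; congr mx2; ring. Qed.

Lemma zs_sq0 : zs F *m zs F = 0.
Proof. by rewrite /zs mx2_mul mx2_zero; congr mx2; ring. Qed.

Lemma Gorbit_expad n u : generator n -> Gorbit u <-> Gorbit (expad n u).
Proof. by move=> gen; split; [exact: Gorbit_fwd | exact: Gorbit_inv]. Qed.

Hypothesis two_neq0 : (2 : F) != 0.

Lemma expad_sq0 n u : n *m n = 0 -> expad n u = (1 + n) *m u *m (1 - n).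
Proof.
move=> nn.
have ad2 : ad n (ad n u) = - (2 : F) *: (n *m u *m n).
  rewrite /ad mulmxBr mulmxBl !mulmxA nn mul0mx -!mulmxA nn mulmx0 sub0r subr0.
  by rewrite mulmxA scaleNr -opprD scaler_nat mulr2n.
rewrite /expad !big_ord_recl big_ord0 addr0 /= ad2 invr1 !scale1r scalerA mulrN mulVf //.
by rewrite scaleN1r /ad mulmxDl mul1mx mulmxBr mulmx1 mulmxDl opprD !addrA.
Qed.

(* Hence exp(ad n) is injective, with inverse conjugation by 1 - n. *)
Lemma expad_inj n : n *m n = 0 -> injective (expad n).
Proof.
move=> nn u v; rewrite !expad_sq0 //.
have inv_l : (1 - n) *m (1 + n) = 1.
  by rewrite mulmxBl mul1mx mulmxDr mulmx1 nn addr0 addrK.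
move=> uv.
have := congr1 (fun w => (1 - n) *m w *m (1 + n)) uv.
by rewrite /= !mulmxA inv_l !mul1mx -!mulmxA inv_l !mulmx1.
Qed.

Lemma expad_xs_lat a b c : expad (xs F) (lat a b c) = lat a (2 * a + 2 * b - c) b.
Proof.
rewrite expad_sq0 ?xs_sq0 // !latE /xs mx2_one mx2_opp !mx2_add !mx2_mul.
by congr mx2; ring.
Qed.

Lemma expad_ys_lat a b c : expad (ys F) (lat a b c) = lat c b (2 * b + 2 * c - a).
Proof.
rewrite expad_sq0 ?ys_sq0 // !latE /ys mx2_one mx2_opp !mx2_add !mx2_mul.
by congr mx2; ring.
Qed.

Lemma expad_zs_lat a b c : expad (zs F) (lat a b c) = lat (2 * a - b + 2 * c) a c.
Proof.
rewrite expad_sq0 ?zs_sq0 // !latE /zs mx2_one mx2_opp !mx2_add !mx2_mul.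
by congr mx2; ring.
Qed.

Lemma Gorbit_xs a b c : Gorbit (lat a b c) <-> Gorbit (lat a (2 * a + 2 * b - c) b).
Proof. by rewrite -expad_xs_lat; apply: Gorbit_expad; left. Qed.

Lemma Gorbit_ys a b c : Gorbit (lat a b c) <-> Gorbit (lat c b (2 * b + 2 * c - a)).
Proof. by rewrite -expad_ys_lat; apply: Gorbit_expad; right; left. Qed.

Lemma Gorbit_zs a b c : Gorbit (lat a b c) <-> Gorbit (lat (2 * a - b + 2 * c) a c).
Proof. by rewrite -expad_zs_lat; apply: Gorbit_expad; right; right. Qed.

Definition quad1_point u : Prop := exists a b c, u = lat a b c /\ quad a b c = 1.

(* This set is stable under each generator and its inverse: the coordinate
   moves preserve Q and are bijections of Z^3. *)
Lemma quad1_point_expad n u : generator n -> quad1_point u <-> quad1_point (expad n u).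
Proof.
move=> gen; split=> [[a [b [c [-> hQ]]]] | [a [b [c [e hQ]]]]].
  case: gen => [|[|]] ->.
  - exists a, (2 * a + 2 * b - c), b; split; first by rewrite expad_xs_lat.
    by rewrite -[RHS]hQ /quad; ring.
  - exists c, b, (2 * b + 2 * c - a); split; first by rewrite expad_ys_lat.
    by rewrite -[RHS]hQ /quad; ring.
  - exists (2 * a - b + 2 * c), a, c; split; first by rewrite expad_zs_lat.
    by rewrite -[RHS]hQ /quad; ring.
case: gen => [|[|]] gen; subst n.
- exists a, c, (2 * a - b + 2 * c); split; last by rewrite -[RHS]hQ /quad; ring.
  by apply: (expad_inj xs_sq0); rewrite e expad_xs_lat; congr lat; ring.
- exists (2 * a + 2 * b - c), b, a; split; last by rewrite -[RHS]hQ /quad; ring.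
  by apply: (expad_inj ys_sq0); rewrite e expad_ys_lat; congr lat; ring.
- exists b, (2 * b + 2 * c - a), c; split; last by rewrite -[RHS]hQ /quad; ring.
  by apply: (expad_inj zs_sq0); rewrite e expad_zs_lat; congr lat; ring.
Qed.

Lemma lat100 : lat 1 0 0 = eqx F.
Proof. by rewrite /lat scale1r !scale0r !addr0. Qed.

Lemma Gorbit_quad1 u : Gorbit u -> quad1_point u.
Proof.
elim=> [|n v gen _ /(quad1_point_expad v gen) //|n v gen _ /(quad1_point_expad v gen) //].
by exists 1, 0, 0; rewrite lat100.
Qed.

Lemma unit_vectors_Gorbit s : s ^+ 2 = 1 ->
  [/\ Gorbit (lat s 0 0), Gorbit (lat 0 s 0) & Gorbit (lat 0 0 s)].
Proof.
have e1 : Gorbit (lat 1 0 0) by rewrite lat100; exact: Gorbit_base.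
have e2 : Gorbit (lat 0 1 0) := (Gorbit_zs _ _ _).1 ((Gorbit_xs _ _ _).1 e1).
have me1 : Gorbit (lat (-1) 0 0) := (Gorbit_zs _ _ _).1 e2.
have e3 : Gorbit (lat 0 0 1) := (Gorbit_ys _ _ _).1 me1.
have me2 : Gorbit (lat 0 (-1) 0) := (Gorbit_zs _ _ _).1 ((Gorbit_xs _ _ _).1 me1).
have me3 : Gorbit (lat 0 0 (-1)) := (Gorbit_ys _ _ _).1 e1.
by move=> s2; have [->|->] : s = 1 \/ s = -1 by nia.
Qed.

(* Conversely every point of L with Q = 1 lies in G(x): by induction on the
   weight, jump the coordinate of largest absolute value (Vieta) until a
   unit vector is reached. *)
Lemma quad1_Gorbit a b c : quad a b c = 1 -> Gorbit (lat a b c).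
Proof.
have [m w_lt] := ubnP (weight a b c); elim: m a b c w_lt => // m IH a b c w_lt hQ.
have [w_le1|w_gt1] := leqP (weight a b c) 1.
  move: hQ; have [[-> ->]|[[-> ->]|[-> ->]]] :
      a = 0 /\ b = 0 \/ a = 0 /\ c = 0 \/ b = 0 /\ c = 0.
    by move: w_le1; rewrite /weight; lia.
  - by move=> hQ; have /unit_vectors_Gorbit[] : c ^+ 2 = 1 by rewrite -[RHS]hQ /quad; ring.
  - by move=> hQ; have /unit_vectors_Gorbit[] : b ^+ 2 = 1 by rewrite -[RHS]hQ /quad; ring.
  - by move=> hQ; have /unit_vectors_Gorbit[] : a ^+ 2 = 1 by rewrite -[RHS]hQ /quad; ring.
have [[ac bc]|[[ba ca]|[ab cb]]] :
    `|a| <= `|c| /\ `|b| <= `|c| \/ `|b| <= `|a| /\ `|c| <= `|a| \/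
    `|a| <= `|b| /\ `|c| <= `|b| by lia.
- apply/Gorbit_xs; apply: IH; last by rewrite -[RHS]hQ /quad; ring.
  by have := quad1_descent hQ ac bc w_gt1; move: w_lt; rewrite /weight; lia.
- have hQ' : quad b c a = 1 by rewrite -[RHS]hQ /quad; ring.
  apply/Gorbit_ys; apply: IH; last by rewrite -[RHS]hQ /quad; ring.
  have := quad1_descent hQ' ba ca; move: w_lt w_gt1; rewrite /weight; lia.
- have hQ' : quad a c b = 1 by rewrite -[RHS]hQ /quad; ring.
  apply/Gorbit_zs; apply: IH; last by rewrite -[RHS]hQ /quad; ring.
  have := quad1_descent hQ' ab cb; move: w_lt w_gt1; rewrite /weight; lia.
Qed.

End Sl2.

Theorem theorem4p11 (F : fieldType) (charF0 : [pchar F] =i pred0) :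
  forall u : 'M[F]_2, Gorbit u <-> (inL u /\ trform u u = 2).
Proof.
have two_neq0 : (2 : F) != 0 by rewrite ((pcharf0P F).1 charF0 2).
move=> u; split.
  move=> /(Gorbit_quad1 two_neq0) [a [b [c [-> hQ]]]].
  by split; [exists a, b, c | rewrite trform_lat hQ].
case=> [[a [b [c ->]]] htr]; apply: quad1_Gorbit => //.
have : (2 * quad a b c)%:~R = (2 * 1)%:~R :> F by rewrite -trform_lat htr.
by move/(pchar0_intr_inj charF0); lia.
Qed.
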